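(* Let $g \geq 1$, let $B(g)$ be the set of binary strings $b=(b_1,\dots,b_{2g})$ of length $2g$ with $b_i \neq b_{i+g}$ for $1 \le i \le g$, and let $E'(g)$ be the set of orbits of $B(g)$ under cyclic shifts whose elements have period $2g$. Then \[ |E'(g)| = \frac{P(2g)}{2g} = \frac{1}{2g} \sum_{\substack{x\mid g \\ x \text{ odd}}} \mu(x)\,2^{g/x}, \] where $P(2g)$ is the number of elements of $B(g)$ of period $2g$.
   Context: The cyclic group of order $2g$ acts on binary strings of length $2g$ by cyclic shifts, preserving $B(g)$. The period of a binary string is the smallest positive integer $k$ such that the string is fixed by the cyclic shift by $k$; period is constant on orbits. $\mu$ is the Möbius function. (Elements of $B(g)$ encode CM types of a cyclic CM field of degree $2g$; the orbits of period $2g$ are exactly the equivalence classes of primitive CM types.) *)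

From mathcomp Require Import all_boot all_order all_algebra.
Set Implicit Arguments. Unset Strict Implicit. Unset Printing Implicit Defensive.
Import GRing.Theory Num.Theory.

Definition bstring (n : nat) := {ffun 'I_n -> bool}.

Definition shift n (k : nat) (s : bstring n) : bstring n :=
  [ffun i : 'I_n => s (Ordinal (ltn_pmod (i + k) (leq_ltn_trans (leq0n i) (ltn_ord i))))].

(* period: the smallest k in 1..n with shift k s = s (n itself always works). *)
Definition period n (s : bstring n) : nat :=
  nth n [seq k <- iota 1 n | shift k s == s] 0.

Definition Bset (g : nat) : {set bstring (2 * g)} :=
  [set s : bstring (2 * g) | [forall i : 'I_(2 * g), forall j : 'I_(2 * g),
     ((i < g) && (val j == val i + g)) ==> (s i != s j)]].

Definition orbit_shift n (s : bstring n) : {set bstring n} :=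
  [set shift k s | k : 'I_n].

Definition Eprime (g : nat) : {set {set bstring (2 * g)}} :=
  [set orbit_shift s | s in [set s in Bset g | period s == 2 * g]].

Definition Pcount (g : nat) : nat := #|[set s in Bset g | period s == 2 * g]|.

Definition moebius (n : nat) : int :=
  if (0 < n) && all (fun p => logn p n == 1) (primes n)
  then ((-1) ^+ size (primes n))%R else 0%R.

From mathcomp Require Import all_boot all_order all_algebra.
From mathcomp Require Import zify.
Import GRing.Theory Num.Theory.
Set Implicit Arguments. Unset Strict Implicit. Unset Printing Implicit Defensive.

(* Reading positions modulo the length, B(g) is the set of strings s with
   shift g s = flip s.  Strings of full period 2g fall into orbits of exactly
   2g elements, whence |E'(g)| = P(2g)/2g.  If s is in B(g), its period p
   divides 2g but not g, so its index 2g/p is an odd divisor of g.  For an odd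
   divisor q of g, the strings of B(g) whose index is a multiple of q are those
   with shift (g/q) s = flip s, and such a string is determined by its first
   g/q bits.  So the numbers P_y of strings of B(g) of index y satisfy
   sum_{y : q | y} P_y = 2^(g/q), with y ranging over the odd divisors of g,
   and Moebius inversion over this divisor-closed set yields P(2g) = P_1. *)

Section CyclicShift.
Variable n : nat.
Implicit Types s t : bstring n.

Definition cbit s (j : nat) : bool := nth false (fgraph s) (j %% n).

Definition flip s : bstring n := [ffun i => ~~ s i].

Lemma cbit_ord s (i : 'I_n) : cbit s i = s i.
Proof. by rewrite /cbit modn_small // nth_fgraph_ord. Qed.

Lemma cbit_lt s j (lt_jn : j < n) : cbit s j = s (Ordinal lt_jn).
Proof. exact: (cbit_ord s (Ordinal lt_jn)). Qed.

Lemma cbit_mod s j : cbit s (j %% n) = cbit s j.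
Proof. by rewrite /cbit modn_mod. Qed.

Lemma cbitDn s j : cbit s (j + n) = cbit s j.
Proof. by rewrite /cbit modnDr. Qed.

Hypothesis n_gt0 : 0 < n.

Lemma cbitE s j : cbit s j = s (Ordinal (ltn_pmod j n_gt0)).
Proof. by rewrite -cbit_ord cbit_mod. Qed.

Lemma eq_cbit s t : (forall j, cbit s j = cbit t j) -> s = t.
Proof. by move=> eq_st; apply/ffunP => i; rewrite -!cbit_ord eq_st. Qed.

Lemma cbit_shift k s j : cbit (shift k s) j = cbit s (j + k).
Proof.
by rewrite !cbitE ffunE -cbit_ord cbitE; congr (s _); apply: val_inj; rewrite /= modn_mod modnDml.
Qed.

Lemma cbit_flip s j : cbit (flip s) j = ~~ cbit s j.
Proof. by rewrite !cbitE ffunE. Qed.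

Lemma flipK : involutive flip.
Proof. by move=> s; apply: eq_cbit => j; rewrite !cbit_flip negbK. Qed.

Lemma flip_neq s : flip s != s.
Proof. by apply/eqP => /(congr1 (cbit^~ 0)); rewrite cbit_flip; case: cbit. Qed.

Lemma shiftD a b s : shift a (shift b s) = shift (b + a) s.
Proof. by apply: eq_cbit => j; rewrite !cbit_shift (addnC b) addnA. Qed.

Lemma shift_flip k s : shift k (flip s) = flip (shift k s).
Proof. by apply: eq_cbit => j; rewrite cbit_shift !cbit_flip cbit_shift. Qed.

Lemma shiftC a b s : shift a (shift b s) = shift b (shift a s).
Proof. by rewrite !shiftD addnC. Qed.

Lemma shift0 s : shift 0 s = s.
Proof. by apply: eq_cbit => j; rewrite cbit_shift addn0. Qed.

Lemma shift_mod k s : shift (k %% n) s = shift k s.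
Proof. by apply: eq_cbit => j; rewrite !cbit_shift -cbit_mod modnDmr cbit_mod. Qed.

Lemma shiftn s : shift n s = s.
Proof. by rewrite -shift_mod modnn shift0. Qed.

Lemma shiftK k s : shift (n - k %% n) (shift k s) = s.
Proof. by rewrite -(shift_mod k) shiftD subnKC ?shiftn // ltnW // ltn_pmod. Qed.

Lemma shift_inj k : injective (@shift n k).
Proof. by move=> s t eq_st; rewrite -(shiftK k s) eq_st shiftK. Qed.

Lemma period_spec s : [/\ 0 < period s <= n, shift (period s) s = s &
  forall k, 0 < k <= n -> shift k s = s -> period s <= k].
Proof.
rewrite /period; set l := [seq k <- iota 1 n | shift k s == s].
have mem_l k : (k \in l) = (shift k s == s) && (0 < k <= n).
  by rewrite mem_filter mem_iota add1n ltnS.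
have n_in_l : n \in l by rewrite mem_l shiftn eqxx n_gt0 leqnn.
have sorted_l : sorted ltn l by apply: sorted_filter (iota_ltn_sorted 1 n); apply: ltn_trans.
clearbody l; case: l mem_l n_in_l sorted_l => // a l mem_l _ sorted_l /=.
have /andP[/eqP fix_a a_range] : (shift a s == s) && (0 < a <= n) by rewrite -mem_l mem_head.
split=> // k k_range fix_k.
have : k \in a :: l by rewrite mem_l fix_k eqxx.
rewrite inE => /predU1P[-> // | k_in_l].
exact/ltnW/(allP (order_path_min ltn_trans sorted_l)).
Qed.

Lemma fixed_shiftE s k : (shift k s == s) = (period s %| k).
Proof.
case: (period_spec s) => /andP[p_gt0 p_le_n] fix_p p_min.
have fix_mul c : shift (c * period s) s = s.
  by elim: c => [|c IH]; rewrite ?shift0 // mulSn -shiftD fix_p IH.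
rewrite {1}(divn_eq k (period s)) -shiftD fix_mul.
apply/eqP/idP => [fix_r | p_dvd_k]; last by rewrite (eqP p_dvd_k) shift0.
rewrite /dvdn -leqn0 leqNgt; apply/negP => r_gt0.
have r_lt_p : k %% period s < period s by rewrite ltn_pmod.
have r_range : 0 < k %% period s <= n by rewrite r_gt0 (leq_trans (ltnW r_lt_p)).
by have := p_min _ r_range fix_r; rewrite leqNgt r_lt_p.
Qed.

Lemma period_dvdn s : period s %| n.
Proof. by rewrite -fixed_shiftE shiftn. Qed.

Definition period_index s := n %/ period s.

Lemma period_indexK s : period_index s * period s = n.
Proof. by rewrite divnK // period_dvdn. Qed.

Lemma period_index_eq1 s : (period_index s == 1) = (period s == n).
Proof.
apply/eqP/eqP => [idx1 | p_eq_n]; last by rewrite /period_index p_eq_n divnn n_gt0.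
by rewrite -[RHS](period_indexK s) idx1 mul1n.
Qed.

Lemma dvdn_period_div s q : 0 < q -> q %| n -> (period s %| n %/ q) = (q %| period_index s).
Proof.
case: (period_spec s) => /andP[p_gt0 _] _ _ q_gt0 q_dvd_n.
by rewrite dvdn_divRL // -[X in _ %| X](period_indexK s) [_ * period s]mulnC dvdn_pmul2l.
Qed.

Lemma period_shift k s : period (shift k s) = period s.
Proof.
rewrite /period; congr nth; apply: eq_filter => m.
by rewrite shiftD addnC -shiftD (inj_eq (@shift_inj k)).
Qed.

Lemma eq_shift_mod s i j : (shift i s == shift j s) = (i == j %[mod period s]).
Proof.
wlog le_ij : i j / i <= j.
  by move=> W; case: (leqP i j) => [|/ltnW] /W //; rewrite eq_sym [in RHS]eq_sym.
by rewrite [RHS]eq_sym eqn_mod_dvd // -(period_shift i) -fixed_shiftE shiftD subnKC // eq_sym.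
Qed.

Lemma mem_orbit_shift k s : shift k s \in orbit_shift s.
Proof. by apply/imsetP; exists (Ordinal (ltn_pmod k n_gt0)); rewrite //= shift_mod. Qed.

Lemma orbit_shift_refl s : s \in orbit_shift s.
Proof. by rewrite -{1}(shift0 s) mem_orbit_shift. Qed.

Lemma orbit_shift_shift k s : orbit_shift (shift k s) = orbit_shift s.
Proof.
have sub t m : orbit_shift (shift m t) \subset orbit_shift t.
  by apply/subsetP => _ /imsetP[j _ ->]; rewrite shiftD mem_orbit_shift.
by apply/eqP; rewrite eqEsubset sub -{1}(shiftK k s) sub.
Qed.

Lemma orbit_shift_eq s t : t \in orbit_shift s -> orbit_shift t = orbit_shift s.
Proof. by case/imsetP => k _ ->; apply: orbit_shift_shift. Qed.

Lemma card_orbit_shift s : #|orbit_shift s| = period s.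
Proof.
case: (period_spec s) => /andP[p_gt0 p_le_n] _ _.
have -> : orbit_shift s = [set shift k s | k : 'I_(period s)].
  apply/setP => t; apply/imsetP/imsetP => -[k _ ->].
    by exists (Ordinal (ltn_pmod k p_gt0)); last by apply/eqP; rewrite eq_shift_mod modn_mod.
  by exists (widen_ord p_le_n k).
rewrite card_imset ?card_ord // => i j /eqP.
by rewrite eq_shift_mod !modn_small // => /eqP /val_inj.
Qed.

Lemma card_shift_closed (S : {set bstring n}) :
  {in S, forall s k, shift k s \in S} -> {in S, forall s, period s = n} ->
  #|S| = #|[set orbit_shift s | s in S]| * n.
Proof.
move=> S_closed S_period; rewrite (card_partition (P := [set orbit_shift s | s in S])).
  rewrite -sum_nat_const; apply: eq_bigr => _ /imsetP[s s_in ->].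
  by rewrite card_orbit_shift S_period.
apply/and3P; split.
- apply/eqP/setP => t; apply/bigcupP/idP => [[_ /imsetP[s s_in ->]] | t_in].
    by case/imsetP => k _ ->; apply: S_closed.
  by exists (orbit_shift t); [apply: imset_f | apply: orbit_shift_refl].
- apply/trivIsetP => _ _ /imsetP[s _ ->] /imsetP[t _ ->] neq_st.
  rewrite disjoints_subset; apply/subsetP => u u_s; rewrite inE; apply: contra neq_st => u_t.
  by rewrite -(orbit_shift_eq u_s) -(orbit_shift_eq u_t).
- by apply/imsetP => -[s _ orbit0]; have := orbit_shift_refl s; rewrite -orbit0 inE.
Qed.

End CyclicShift.

Section Antiperiodic.
Variables n e : nat.
Hypotheses (n_gt0 : 0 < n) (e_gt0 : 0 < e) (dvd_2e_n : 2 * e %| n).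

Definition antiext (t : bstring e) : bstring n :=
  [ffun i : 'I_n => t (Ordinal (ltn_pmod i e_gt0)) (+) odd (i %/ e)].

Definition antires (s : bstring n) : bstring e := [ffun i : 'I_e => cbit s i].

Lemma cbit_antiext t j : cbit (antiext t) j = t (Ordinal (ltn_pmod j e_gt0)) (+) odd (j %/ e).
Proof.
have [c n_eq] := dvdnP dvd_2e_n.
rewrite cbitE ffunE /=; congr (t _ (+) _).
  by apply: val_inj; rewrite /= modn_dvdm // (dvdn_trans _ dvd_2e_n) // dvdn_mull.
have -> : j %/ e = j %/ n * c * 2 + j %% n %/ e.
  by rewrite {1}(divn_eq j n) {2}n_eq !mulnA divnMDl.
by rewrite oddD oddM andbF.
Qed.

Lemma antiext_antiperiodic t : shift e (antiext t) = flip (antiext t).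
Proof.
apply: eq_cbit => // j; rewrite cbit_shift // cbit_flip // !cbit_antiext.
have -> : Ordinal (ltn_pmod (j + e) e_gt0) = Ordinal (ltn_pmod j e_gt0).
  by apply: val_inj; rewrite /= modnDr.
by rewrite divnDr // divnn e_gt0 addn1 /= addbN.
Qed.

Lemma antiextK s : shift e s = flip s -> antiext (antires s) = s.
Proof.
move=> anti_s.
have cbit_add_e j : cbit s (j + e) = ~~ cbit s j.
  by rewrite -cbit_shift // anti_s cbit_flip.
have cbit_addM q j : cbit s (j + q * e) = cbit s j (+) odd q.
  elim: q => [|q IH]; first by rewrite mul0n addn0 addbF.
  by rewrite mulSnr addnA cbit_add_e IH /= addbN.
apply: eq_cbit => // j; rewrite cbit_antiext ffunE /=.
by rewrite {3}(divn_eq j e) addnC cbit_addM.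
Qed.

Lemma antiext_inj : injective antiext.
Proof.
move=> t1 t2 eq_t; apply/ffunP => i.
have bit_i (t : bstring e) : t i = cbit (antiext t) i.
  rewrite cbit_antiext divn_small // addbF; congr (t _).
  by apply: val_inj; rewrite /= modn_small.
by rewrite !bit_i eq_t.
Qed.

Lemma card_antiperiodic : #|[set s : bstring n | shift e s == flip s]| = 2 ^ e.
Proof.
have -> : [set s : bstring n | shift e s == flip s] = antiext @: setT.
  apply/setP => s; rewrite inE; apply/eqP/imsetP => [anti_s | [t _ ->]].
    by exists (antires s); rewrite ?antiextK.
  exact: antiext_antiperiodic.
by rewrite card_imset ?cardsT ?card_ffun ?card_bool ?card_ord //; apply: antiext_inj.
Qed.

End Antiperiodic.

Lemma card_fibers (T : finType) (A : {set T}) (f : T -> nat) (r : seq nat) :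
  uniq r -> {in A, forall x, f x \in r} -> #|A| = \sum_(y <- r) #|[set x in A | f x == y]|.
Proof.
move=> uniq_r f_in_r.
have card_fiber y : #|[set x in A | f x == y]| = \sum_(x in A) (f x == y).
  rewrite -sum1_card big_mkcond [RHS]big_mkcond /=; apply: eq_bigr => x _.
  by rewrite !inE; case: (x \in A); case: (f x == y).
rewrite (eq_bigr _ (fun y _ => card_fiber y)) exchange_big /= -sum1_card.
apply: eq_bigr => x x_in_A; have := count_uniq_mem (f x) uniq_r.
rewrite f_in_r // -sum1_count /= => <-.
by rewrite big_mkcond /=; apply: eq_bigr => y _; rewrite eq_sym; case: (_ == _).
Qed.

Definition odd_divisors g := [seq d <- divisors g | odd d].

Lemma mem_odd_divisors g d : 0 < g -> (d \in odd_divisors g) = odd d && (d %| g).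
Proof. by move=> g_gt0; rewrite mem_filter -dvdn_divisors. Qed.

Lemma odd_divisors_uniq g : uniq (odd_divisors g).
Proof. by rewrite filter_uniq // divisors_uniq. Qed.

Lemma odd_divisors_closed g : 0 < g ->
  {in odd_divisors g, forall y d, d %| y -> d \in odd_divisors g}.
Proof.
move=> g_gt0 y; rewrite mem_odd_divisors // => /andP[odd_y y_dvd_g] d d_dvd_y.
rewrite mem_odd_divisors // (dvdn_trans d_dvd_y y_dvd_g) andbT; apply: contraLR odd_y.
by rewrite -!dvdn2 => /dvdn_trans/(_ d_dvd_y).
Qed.

Section Bset.
Variable g : nat.
Hypothesis g_gt0 : 0 < g.
Implicit Types s : bstring (2 * g).

Let n_gt0 : 0 < 2 * g. Proof. by rewrite muln_gt0. Qed.

Lemma BsetP s : reflect (forall i, i < g -> cbit s (i + g) != cbit s i) (s \in Bset g).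
Proof.
have lt_2g i : i < g -> i < 2 * g by move=> lt_ig; rewrite mul2n -addnn ltn_addr.
have lt_2g' i : i < g -> i + g < 2 * g by move=> lt_ig; rewrite mul2n -addnn ltn_add2r.
rewrite inE; apply: (iffP forallP) => [B i lt_ig | B i].
  have /forallP/(_ (Ordinal (lt_2g' i lt_ig))) := B (Ordinal (lt_2g i lt_ig)).
  by rewrite /= lt_ig eqxx (cbit_lt s (lt_2g i lt_ig)) (cbit_lt s (lt_2g' i lt_ig)) eq_sym.
apply/forallP => j; apply/implyP => /andP[lt_ig /eqP j_eq].
by rewrite -!cbit_ord j_eq eq_sym B.
Qed.

Lemma BsetE s : (s \in Bset g) = (shift g s == flip s).
Proof.
apply/BsetP/eqP => [B | anti_s i _]; last first.
  by rewrite -(cbit_shift n_gt0 g) anti_s cbit_flip //; case: cbit.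
have B' i : i < g -> cbit s (i + g) = ~~ cbit s i by move=> /B; case: cbit; case: cbit.
apply: eq_cbit => // j; rewrite cbit_shift // cbit_flip //.
rewrite -cbit_mod -modnDml cbit_mod -(cbit_mod _ j).
have : j %% (2 * g) < 2 * g by rewrite ltn_pmod.
move: (j %% (2 * g)) => r lt_r2g; case: (ltnP r g) => [/B' // | le_gr].
rewrite -(subnK le_gr) -addnA addnn -mul2n cbitDn B' ?negbK // ltn_subLR // addnn -mul2n //.
Qed.

Lemma Bset_shift k s : s \in Bset g -> shift k s \in Bset g.
Proof. by rewrite !BsetE => /eqP anti_s; rewrite shiftC // anti_s shift_flip. Qed.

Lemma Bset_period_index s : s \in Bset g -> odd (period_index s) /\ period_index s %| g.
Proof.
rewrite /period_index BsetE => /eqP anti_s.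
have p_ndvd_g : ~~ (period s %| g) by rewrite -fixed_shiftE // anti_s flip_neq.
have gE : 2 * g = 2 * g %/ period s * period s by rewrite divnK // period_dvdn.
have odd_q : odd (2 * g %/ period s).
  apply: contraR p_ndvd_g => /negbTE even_q.
  have := odd_double_half (2 * g %/ period s); rewrite even_q add0n -muln2 => qE.
  by apply/dvdnP; exists (2 * g %/ period s)./2; nia.
split=> //; have q_dvd_2g : 2 * g %/ period s %| 2 * g by rewrite dvdn_div // period_dvdn.
by rewrite -(Gauss_dvdr g (_ : coprime _ 2)) ?coprimen2.
Qed.

Lemma card_Bset_index_dvd q : odd q -> q %| g ->
  #|[set s in Bset g | q %| period_index s]| = 2 ^ (g %/ q).
Proof.
move=> odd_q q_dvd_g; have q_gt0 := odd_gt0 odd_q; set e := g %/ q.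
have e_gt0 : 0 < e by rewrite divn_gt0 // dvdn_leq.
have gE : g = q./2 * (2 * e) + e.
  by have := odd_double_half q; rewrite odd_q -muln2 /e; have := divnK q_dvd_g; nia.
have index_dvdE s : (q %| period_index s) = (shift (2 * e) s == s).
  by rewrite fixed_shiftE // /e muln_divA // dvdn_period_div // dvdn_mull.
have shift_g s : shift (2 * e) s = s -> shift g s = shift e s.
  move=> fix_2e; transitivity (shift (q./2 * (2 * e) + e) s); first by rewrite -gE.
  rewrite -shiftD //; congr shift.
  by apply/eqP; rewrite fixed_shiftE // dvdn_mull // -fixed_shiftE // fix_2e.
rewrite -(card_antiperiodic n_gt0 e_gt0 (_ : 2 * e %| 2 * g)); last first.
  by rewrite dvdn_pmul2l // dvdn_divLR ?dvdn_mulr.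
apply: eq_card => s; rewrite inE [RHS]inE index_dvdE BsetE.
apply/andP/eqP => [[/eqP anti_g /eqP fix_2e] | anti_e]; first by rewrite -shift_g.
have fix_2e : shift (2 * e) s = s.
  by rewrite (mul2n e) -addnn -shiftD // anti_e shift_flip // anti_e flipK.
by rewrite shift_g // anti_e fix_2e !eqxx.
Qed.

Lemma sum_card_Bset_index q : odd q -> q %| g ->
  \sum_(y <- odd_divisors g | q %| y) #|[set s in Bset g | period_index s == y]| = 2 ^ (g %/ q).
Proof.
move=> odd_q q_dvd_g; rewrite -card_Bset_index_dvd //.
rewrite (@card_fibers _ _ (@period_index _) (odd_divisors g)) ?odd_divisors_uniq //; last first.
  by move=> s /setIdP[/Bset_period_index[odd_idx idx_dvd_g] _]; rewrite mem_odd_divisors // odd_idx.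
rewrite big_mkcond /=; apply: eq_bigr => y _.
case: ifP => q_dvd_y.
  by apply: eq_card => s; rewrite !inE; case: (_ =P y) => [->|]; rewrite ?q_dvd_y ?andbT ?andbF.
apply/esym/eqP; rewrite cards_eq0; apply/eqP/setP => s.
by rewrite !inE; case: (_ =P y) => [->|]; rewrite ?q_dvd_y ?andbF.
Qed.

Lemma Pcount_Eprime : Pcount g = #|Eprime g| * (2 * g).
Proof.
apply: card_shift_closed => // s; rewrite inE => /andP[s_B /eqP p_s] //.
by move=> k; rewrite inE Bset_shift // period_shift // p_s eqxx.
Qed.

Lemma Pcount_index : Pcount g = #|[set s in Bset g | period_index s == 1]|.
Proof. by apply: eq_card => s; rewrite !inE period_index_eq1. Qed.

End Bset.

Lemma moebius_sqr_dvd p m : prime p -> p * p %| m -> moebius m = 0%R.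
Proof.
move=> p_pr pp_dvd_m; rewrite /moebius; case: ifP => // /andP[m_gt0 /allP squarefree].
have p_in_m : p \in primes m.
  by rewrite mem_primes p_pr m_gt0 (dvdn_trans (dvdn_mulr p (dvdnn p)) pp_dvd_m).
move: pp_dvd_m; rewrite mulnn pfactor_dvdn //.
by rewrite (eqP (squarefree p p_in_m)).
Qed.

Lemma moebiusMprime p m : prime p -> 0 < m -> ~~ (p %| m) -> moebius (p * m) = (- moebius m)%R.
Proof.
move=> p_pr m_gt0 p_ndvd_m; have p_gt0 := prime_gt0 p_pr.
have pm_gt0 : 0 < p * m by rewrite muln_gt0 p_gt0.
have primesM_p : primes (p * m) =i p :: primes m.
  by move=> q; rewrite primesM // primes_prime // !inE.
have p_notin_m : p \notin primes m by rewrite mem_primes (negbTE p_ndvd_m) !andbF.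
have size_primes : size (primes (p * m)) = (size (primes m)).+1.
  have uniq_pm : uniq (p :: primes m) by rewrite /= p_notin_m primes_uniq.
  by rewrite (perm_size (uniq_perm (primes_uniq _) uniq_pm primesM_p)).
have logn_p_m : logn p m = 0.
  by apply/eqP; rewrite -leqn0 leqNgt logn_gt0 (negbTE p_notin_m).
have squarefreeE : all (fun q => logn q (p * m) == 1) (primes (p * m)) =
                   all (fun q => logn q m == 1) (primes m).
  rewrite (eq_all_r primesM_p) /= lognM // logn_prime // eqxx logn_p_m /=.
  apply: eq_in_all => q q_in_m; have q_neq_p : q != p by apply: contraNneq p_notin_m => <-.
  by rewrite lognM // logn_prime // (negPf q_neq_p).
rewrite /moebius pm_gt0 m_gt0 /= squarefreeE size_primes.
by case: ifP => _; rewrite ?oppr0 // exprS mulN1r.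
Qed.

Lemma divisors_dvd_perm p m : 0 < p -> 0 < m -> p %| m ->
  perm_eq [seq d <- divisors m | p %| d] [seq p * d | d <- divisors (m %/ p)].
Proof.
move=> p_gt0 m_gt0 p_dvd_m; have mp_gt0 : 0 < m %/ p by rewrite divn_gt0 // dvdn_leq.
apply: uniq_perm; rewrite ?filter_uniq ?divisors_uniq //.
  by rewrite map_inj_uniq ?divisors_uniq // => a b /eqP; rewrite eqn_pmul2l // => /eqP.
move=> d; rewrite mem_filter -dvdn_divisors //; apply/andP/mapP.
  case=> /dvdnP[c ->] c_dvd; exists c; last by rewrite mulnC.
  by rewrite -dvdn_divisors // dvdn_divRL.
case=> c; rewrite -dvdn_divisors // dvdn_divRL // => c_dvd ->.
by rewrite dvdn_mulr // mulnC.
Qed.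

Lemma divisors_ndvd_perm p m : prime p -> 0 < m -> p %| m ->
  perm_eq [seq d <- divisors m | ~~ (p %| d)] [seq d <- divisors (m %/ p) | ~~ (p %| d)].
Proof.
move=> p_pr m_gt0 p_dvd_m; have p_gt0 := prime_gt0 p_pr.
have mp_gt0 : 0 < m %/ p by rewrite divn_gt0 // dvdn_leq.
apply: uniq_perm; rewrite ?filter_uniq ?divisors_uniq // => d.
rewrite !mem_filter -!dvdn_divisors //; case: (boolP (p %| d)) => //= p_ndvd_d.
by rewrite dvdn_divRL // Gauss_dvd ?p_dvd_m ?andbT // coprime_sym prime_coprime.
Qed.

Lemma sum_moebius_divisors n : 0 < n ->
  (\sum_(d <- divisors n) moebius d = (n == 1)%N%:R)%R.
Proof.
move=> n_gt0; case: (ltngtP n 1) => [| n_gt1 | ->]; last by rewrite big_seq1.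
  by rewrite ltnNge n_gt0.
have p_pr := pdiv_prime n_gt1; have p_dvd_n := pdiv_dvd n; set p := pdiv n in p_pr p_dvd_n *.
have p_gt0 := prime_gt0 p_pr; have np_gt0 : 0 < n %/ p by rewrite divn_gt0 // dvdn_leq.
rewrite (bigID (dvdn p)) /= -!(big_filter (divisors n)).
rewrite (perm_big _ (divisors_dvd_perm p_gt0 n_gt0 p_dvd_n)) big_map.
rewrite (perm_big _ (divisors_ndvd_perm p_pr n_gt0 p_dvd_n)) big_filter.
rewrite (bigID (dvdn p)) /= big1 => [|d p_dvd_d]; last first.
  by apply: (moebius_sqr_dvd p_pr); rewrite dvdn_pmul2l.
rewrite add0r big_seq_cond (eq_bigr (fun d => - moebius d)%R) => [|d /andP[d_div p_ndvd_d]].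
  by rewrite -big_seq_cond sumrN addNr.
by apply: moebiusMprime; rewrite // (dvdn_gt0 np_gt0) // dvdn_divisors.
Qed.

Lemma moebius_inversion1 (R : ringType) (D : seq nat) (f : nat -> R) :
  uniq D -> 1 \in D -> 0 \notin D -> {in D, forall y d, d %| y -> d \in D} ->
  (\sum_(x <- D) (moebius x)%:~R * \sum_(y <- D | (x %| y)%N) f y = f 1%N)%R.
Proof.
move=> uniq_D D1 D0 D_closed.
have D_gt0 y : y \in D -> 0 < y by rewrite lt0n; apply: contraTneq => ->.
have divisorsE y : y \in D -> perm_eq [seq x <- D | x %| y] (divisors y).
  move=> yD; apply: uniq_perm; rewrite ?filter_uniq ?divisors_uniq // => x.
  rewrite mem_filter -dvdn_divisors ?D_gt0 //.
  by apply/andP/idP => [[] // | x_dvd_y]; split; last exact: D_closed x_dvd_y.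
under eq_bigr do rewrite mulr_sumr big_mkcond.
rewrite exchange_big /= big_seq (eq_bigr (fun y => (y == 1)%N%:R * f y)%R) => [|y yD]; last first.
  rewrite -big_mkcond -mulr_suml -big_filter (perm_big _ (divisorsE y yD)) -rmorph_sum /=.
  by rewrite sum_moebius_divisors ?D_gt0 // mulrz_nat.
rewrite -big_seq (bigD1_seq 1) //= big1_seq => [|y /andP[/negPf-> _]]; last by rewrite mul0r.
by rewrite mul1r addr0.
Qed.

Local Open Scope ring_scope.

Theorem mainTheorem2 (g : nat) (hg : (1 <= g)%N) :
  (#|Eprime g|%:R : rat) = (Pcount g)%:R / (2 * g)%:R /\
  (#|Eprime g|%:R : rat) =
    ((2 * g)%:R)^-1 *
      \sum_(x <- divisors g | odd x) (moebius x)%:~R * (2 ^ (g %/ x))%:R.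
Proof.
have orbitsE : (#|Eprime g|%:R : rat) = (Pcount g)%:R / (2 * g)%:R.
  by rewrite Pcount_Eprime // natrM mulfK // pnatr_eq0 -lt0n muln_gt0.
split=> //; rewrite orbitsE mulrC -big_filter -/(odd_divisors g) Pcount_index //.
rewrite -(@moebius_inversion1 _ (odd_divisors g)
            (fun y => #|[set s in Bset g | period_index s == y]|%:R)).
- congr (_ * _); apply: eq_big_seq => x; rewrite mem_odd_divisors // => /andP[odd_x x_dvd_g].
  by rewrite -natr_sum sum_card_Bset_index.
- exact: odd_divisors_uniq.
- by rewrite mem_odd_divisors ?dvd1n.
- by rewrite mem_odd_divisors.
- exact: odd_divisors_closed.
Qed.
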